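(* Let $H$ be a graph with at least one edge and no isolated vertices, and let $t\ge 1$. Let $C$ be the graph obtained from $\mu_t(H)$ by adding $\ell\ge 1$ new vertices $x_1,\dots,x_\ell$, each adjacent only to the root $w$ of $\mu_t(H)$. If $S$ is a subset of $V(\mu_t(H))\setminus\{w\}$ of minimum size among those subsets $S'$ for which $S'\cup\{w\}$ is a determining set for $\mu_t(H)$, then $S\cup\{x_2,\dots,x_\ell\}$ is a minimum size determining set for $C$.
   Context: All graphs are finite and simple. For a graph $G$ with $V(G)=\{v_1,\dots,v_n\}$ and an integer $t\ge1$, the generalized Mycielskian $\mu_t(G)$ has vertex set $\{u_i^s: 1\le i\le n,\ 0\le s\le t\}\cup\{w\}$, where $u_i^0$ is identified with $v_i$. Its edges are: $u_i^0u_j^0$ for each edge $v_iv_j$ of $G$; $u_i^su_j^{s+1}$ and $u_j^su_i^{s+1}$ for each edge $v_iv_j$ of $G$ and each $0\le s<t$; and $u_i^tw$ for all $1\le i\le n$. The vertex $w$ is called the root, and $u_i^s$ is the shadow of $v_i$ at level $s$. A set $S\subseteq V(G)$ is a determining set for $G$ if the only automorphism of $G$ fixing every vertex of $S$ is the identity. *)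

From mathcomp Require Import all_boot all_fingroup.
Set Implicit Arguments. Unset Strict Implicit. Unset Printing Implicit Defensive.

(* A simple graph: a finType T with a symmetric irreflexive relation e. *)

(* Vertices of mu_t(G): None is the root w, Some (s, v) is the shadow u_v^s
   of v at level s (0 <= s <= t); level 0 is identified with V(G). *)
Definition myc_vertex (T : finType) (t : nat) : finType :=
  option ('I_t.+1 * T)%type.

Definition myc_adj (T : finType) (e : rel T) (t : nat) : rel (myc_vertex T t) :=
  fun x y =>
    match x, y with
    | Some (s, a), Some (r, b) =>
        e a b && [|| ((s : nat) == 0%N) && ((r : nat) == 0%N),
                     (s.+1 == r) | (r.+1 == s)]
    | None, Some (r, _) => (r : nat) == t
    | Some (s, _), None => (s : nat) == t
    | None, None => false
    end.

(* Vertices of C: inl x for x in mu_t(G), inr i for the pendant vertex x_{i+1}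
   (i : 'I_l), adjacent only to the root. *)
Definition pend_vertex (T : finType) (t l : nat) : finType :=
  (myc_vertex T t + 'I_l)%type.

Definition pend_adj (T : finType) (e : rel T) (t l : nat) : rel (pend_vertex T t l) :=
  fun x y =>
    match x, y with
    | inl a, inl b => @myc_adj T e t a b
    | inl a, inr _ => a == None
    | inr _, inl b => b == None
    | inr _, inr _ => false
    end.

Definition is_aut (V : finType) (g : rel V) (p : {perm V}) : Prop :=
  forall x y, g (p x) (p y) = g x y.

Definition determining (V : finType) (g : rel V) (S : {set V}) : Prop :=
  forall p : {perm V}, is_aut g p -> (forall x, x \in S -> p x = x) -> p = 1%g.

Definition min_determining (V : finType) (g : rel V) (S : {set V}) : Prop :=
  determining g S /\ (forall S' : {set V}, determining g S' -> #|S| <= #|S'|).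

Arguments myc_adj {T} e t.
Arguments pend_adj {T} e t l.

From mathcomp Require Import all_boot all_fingroup zify.
Set Implicit Arguments. Unset Strict Implicit. Unset Printing Implicit Defensive.

(* The proof rests on the rigidity of this construction:
   - the pendant vertices are exactly the vertices of C of degree one (every
     vertex of mu_t(H) has two distinct neighbours, because H has no isolated
     vertices), so every automorphism of C permutes them, fixes their common
     neighbour w, and restricts to an automorphism of mu_t(H);
   - conversely, every automorphism of mu_t(H) fixing w extends to C by the
     identity on the pendant vertices, and any two pendant vertices can be
     swapped by an automorphism of C.
   Consequently a set is determining for C iff its trace on mu_t(H) together
   with w is determining for mu_t(H) and it omits at most one pendant vertex.
   Counting both parts separately gives the lower bound |S| + (l - 1), which
   S u {x_2, ..., x_l} attains.
   The hypothesis t >= 1 turns out not to be needed. *)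

Lemma is_aut_inv (V : finType) (g : rel V) (p : {perm V}) :
  is_aut g p -> is_aut g p^-1.
Proof. by move=> autp x y; rewrite -autp !permKV. Qed.

Definition pendant (V : finType) (g : rel V) (x : V) : Prop :=
  exists y, forall z, g x z = (z == y).

Lemma is_aut_pendant (V : finType) (g : rel V) (p : {perm V}) (x : V) :
  is_aut g p -> pendant g x -> pendant g (p x).
Proof.
move=> autp [y nbr_x]; exists (p y) => z.
by rewrite -{1}(permKV p z) autp nbr_x (can2_eq (permKV p) (permK p)).
Qed.

Lemma two_neighbours_not_pendant (V : finType) (g : rel V) (x y1 y2 : V) :
  g x y1 -> g x y2 -> y1 != y2 -> ~ pendant g x.
Proof.
move=> g1 g2 /eqP y12 [y nbr_x]; apply: y12.
by move: g1 g2; rewrite !nbr_x => /eqP-> /eqP->.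
Qed.

Lemma card_sum_split (X Y : finType) (A : {set X}) (B : {set Y}) :
  #|inl @: A :|: inr @: B| = #|A| + #|B|.
Proof.
have disjAB : inl @: A :&: inr @: B = set0 :> {set X + Y}.
  by apply/setP => z; rewrite !inE; apply/negbTE/andP => -[/imsetP[x _ ->] /imsetP[]].
by rewrite cardsU disjAB cards0 subn0 !card_imset //; [exact: inr_inj | exact: inl_inj].
Qed.

Lemma card_sum_preimages (X Y : finType) (A : {set X + Y}) :
  #|A| = #|inl @^-1: A| + #|inr @^-1: A|.
Proof.
have splitA : A = inl @: (inl @^-1: A) :|: inr @: (inr @^-1: A).
  apply/setP => -[x|y]; rewrite !inE.
  - rewrite (mem_imset _ _ inl_inj) inE.
    by case: imsetP => [[? _]|]; rewrite ?orbF.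
  - rewrite (mem_imset _ _ inr_inj) inE.
    by case: imsetP => [[? _]|].
by rewrite {1}splitA card_sum_split.
Qed.

Section PendantMycielskian.
Variables (T : finType) (e : rel T) (t l : nat).
Hypothesis no_isolated : forall a, exists b, e a b.
(* A vertex of H, giving the root a neighbour u_(a0)^t besides the x_i. *)
Variable a0 : T.

Local Notation M := (myc_adj e t).
(* C has l + 1 >= 1 pendant vertices, indexed by 'I_l.+1; x_1 is ord0. *)
Local Notation C := (pend_adj e t l.+1).

(* Every shadow u_a^s has two distinct neighbours in mu_t(H): u_b^(s-1)
   (or u_b^0 at level 0) and u_b^(s+1) (or the root at level t), where b is a
   neighbour of a in H. *)
Lemma myc_two_neighbours (v : myc_vertex T t) :
  v != None -> exists y1 y2, [/\ M v y1, M v y2 & y1 != y2].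
Proof.
case: v => [[s a]|] // _; have [b ab] := no_isolated a.
have s_lt := ltn_ord s.
exists (Some (inord s.-1, b)), (if s < t then Some (inord s.+1, b) else None).
split.
- rewrite /= ab inordK; last by lia.
  by case: (s : nat) => [|n] /=; rewrite ?eqxx ?orbT.
- by case: ltnP => s_t; rewrite /= ?ab ?inordK ?eqxx ?orbT //; lia.
- case: ltnP => s_t //; apply/eqP => -[/(congr1 val)] /=.
  by rewrite !inordK; lia.
Qed.

Lemma leaf_pendant (i : 'I_l.+1) : pendant C (inr i).
Proof. by exists (inl None) => -[]. Qed.

(* ... and they are the only ones: the root is adjacent to x_1 and to a
   shadow at level t, and the other vertices keep their two neighbours. *)
Lemma inl_not_pendant (x : myc_vertex T t) : ~ pendant C (inl x).
Proof.
case: (eqVneq x None) => [->|x_shadow].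
  pose top_shadow : pend_vertex T t l.+1 := inl (Some (ord_max, a0)).
  by apply: (two_neighbours_not_pendant (y1 := inr ord0) (y2 := top_shadow)) => /=.
have [y1 [y2 [x_y1 x_y2 y12]]] := myc_two_neighbours x_shadow.
exact: (two_neighbours_not_pendant (y1 := inl y1) (y2 := inl y2)).
Qed.

Lemma aut_leaf (p : {perm pend_vertex T t l.+1}) (i : 'I_l.+1) :
  is_aut C p -> exists j, p (inr i) = inr j.
Proof.
move=> autp; have := is_aut_pendant autp (leaf_pendant i).
by case: (p (inr i)) => [x /(inl_not_pendant)|j _]; last exists j.
Qed.

Lemma aut_inl (p : {perm pend_vertex T t l.+1}) (x : myc_vertex T t) :
  is_aut C p -> exists y, p (inl x) = inl y.
Proof.
move=> autp; case E: (p (inl x)) => [y|j]; first by exists y.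
have := is_aut_pendant (is_aut_inv autp) (leaf_pendant j).
by rewrite -E permK => /(inl_not_pendant).
Qed.

(* The root is the unique neighbour of the pendant vertex x_1, so it is fixed. *)
Lemma aut_root (p : {perm pend_vertex T t l.+1}) :
  is_aut C p -> p (inl None) = inl None.
Proof.
move=> autp; have [j pj] := aut_leaf ord0 autp.
have : C (p (inr ord0)) (p (inl None)) by rewrite autp.
by rewrite pj; case: (p (inl None)) => //= y /eqP->.
Qed.

Lemma aut_restrict (p : {perm pend_vertex T t l.+1}) :
  is_aut C p ->
  exists2 q : {perm myc_vertex T t}, is_aut M q & forall x, p (inl x) = inl (q x).
Proof.
move=> autp; pose f x := if p (inl x) is inl y then y else x.
have pf x : p (inl x) = inl (f x) by rewrite /f; have [y ->] := aut_inl x autp.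
have f_inj : injective f.
  by move=> x y fxy; apply: inl_inj; apply: (@perm_inj _ p); rewrite !pf fxy.
exists (perm f_inj) => [x y|x]; last by rewrite permE pf.
by have := autp (inl x) (inl y); rewrite !permE !pf.
Qed.

Lemma aut_extend (q : {perm myc_vertex T t}) :
  is_aut M q -> q None = None ->
  exists p : {perm pend_vertex T t l.+1},
    [/\ is_aut C p, forall x, p (inl x) = inl (q x) & forall i, p (inr i) = inr i].
Proof.
move=> autq q_root.
pose f (v : pend_vertex T t l.+1) := if v is inl x then inl (q x) else v.
have f_inj : injective f by move=> [x|i] [y|j] //= [/perm_inj ->].
have q_root_iff x : (q x == None) = (x == None) by rewrite -{1}q_root (inj_eq perm_inj).
exists (perm f_inj); split => [[x|i] [y|j]|x|i]; by rewrite !permE /= ?autq ?q_root_iff.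
Qed.

Lemma aut_swap_leaves (i k : 'I_l.+1) : is_aut C (tperm (inr i) (inr k)).
Proof.
have swap_inl (x : myc_vertex T t) : tperm (inr i) (inr k) (inl x) = inl x.
  by rewrite tpermD.
have swap_inr (j : 'I_l.+1) :
  exists j', tperm (inr i) (inr k) (inr j : pend_vertex T t l.+1) = inr j'.
  by case: tpermP => _; [exists k | exists i | exists j].
move=> [x|j] [y|j']; rewrite ?swap_inl //.
- by have [? ->] := swap_inr j'.
- by have [? ->] := swap_inr j.
- by have [? ->] := swap_inr j; have [? ->] := swap_inr j'.
Qed.

Lemma determining_extend (S : {set myc_vertex T t}) (z : 'I_l.+1) :
  determining M (None |: S) -> determining C (inl @: S :|: inr @: [set~ z]).
Proof.
move=> detS p autp p_fix.
have [q autq pq] := aut_restrict autp.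
have q1 : q = 1%g.
  apply: detS => // x /setU1P[->|xS].
    by have := pq None; rewrite (aut_root autp) => -[<-].
  by have := pq x; rewrite p_fix ?inE ?imset_f // => -[<-].
have fix_leaf j : j != z -> p (inr j) = inr j.
  by move=> jz; apply: p_fix; rewrite inE imset_f ?orbT // !inE.
apply/permP => -[x|i]; first by rewrite pq q1 !perm1.
rewrite perm1; case: (eqVneq i z) => [->|]; last exact: fix_leaf.
have [j pz] := aut_leaf z autp.
case: (eqVneq j z) => [jz|jz]; first by rewrite pz jz.
by move: pz; rewrite -(fix_leaf j jz) => /perm_inj [zj]; rewrite zj eqxx in jz.
Qed.

Lemma determining_restrict (S' : {set pend_vertex T t l.+1}) :
  determining C S' -> determining M (None |: inl @^-1: S').
Proof.
move=> detS' q autq q_fix.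
have [p [autp pq p_leaf]] := aut_extend autq (q_fix None (setU11 _ _)).
have p1 : p = 1%g.
  by apply: (detS' _ autp) => -[x|i] xS; rewrite ?pq ?p_leaf // q_fix // !inE xS orbT.
by apply/permP => x; have := pq x; rewrite p1 !perm1 => -[<-].
Qed.

(* Lower bound, second part: a determining set of C omits at most one pendant
   vertex, since two omitted ones could be swapped. *)
Lemma determining_leaves (S' : {set pend_vertex T t l.+1}) :
  determining C S' -> l <= #|inr @^-1: S'|.
Proof.
move=> detS'; rewrite leqNgt; apply/negP => few.
have : 1 < #|~: (inr @^-1: S')| by have := cardsC (inr @^-1: S'); rewrite card_ord; lia.
case/card_gt1P => i [k []]; rewrite !inE => iS' kS' ik.
have swap_fix v : v \in S' -> tperm (inr i) (inr k) v = v.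
  move=> vS'; rewrite tpermD //.
  - by apply: contraNneq iS' => ->.
  - by apply: contraNneq kS' => ->.
move/permP/(_ (inr i)): (detS' _ (aut_swap_leaves i k) swap_fix).
by rewrite tpermL perm1 => -[ki]; rewrite ki eqxx in ik.
Qed.

End PendantMycielskian.

Theorem mainTheorem1 (T : finType) (e : rel T)
  (e_sym : symmetric e) (e_irr : irreflexive e)
  (has_edge : exists a b, e a b)
  (no_isolated : forall a, exists b, e a b)
  (t : nat) (ht : 1 <= t) (l : nat) (hl : 1 <= l)
  (S : {set myc_vertex T t})
  (hSw : None \notin S)
  (hSdet : determining (myc_adj e t) (None |: S))
  (hSmin : forall S' : {set myc_vertex T t}, None \notin S' ->
             determining (myc_adj e t) (None |: S') -> #|S| <= #|S'|) :
  min_determining (pend_adj e t l)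
    ([set inl x | x in S] :|: [set inr i | i : 'I_l & 0 < (i : nat)]).
Proof.
have [a0 _] := has_edge.
case: l hl => [//|l] _.
have -> : [set i : 'I_l.+1 | 0 < (i : nat)] = [set~ ord0].
  by apply/setP => i; rewrite !inE lt0n.
split=> [|S' detS']; first exact: determining_extend no_isolated a0 _ _ hSdet.
rewrite card_sum_split cardsC1 card_ord (card_sum_preimages S') leq_add //.
- have shadowsS' : None |: (inl @^-1: S' :\ None) = None |: inl @^-1: S'.
    by apply/setP => x; rewrite !inE; case: eqP.
  apply: leq_trans (subset_leq_card (subD1set _ None)).
  by apply: hSmin; rewrite ?setD11 // shadowsS'; exact: determining_restrict.
- exact: (determining_leaves detS').
Qed.
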